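(* Let $n\ge 3$ and $2\le i\le n-1$, and let $\beta\in B_n(D)$ be such that $\pi(\beta)$ is a cycle of length $i+1$. Then the subgroup $H_\beta=\langle P_n(D),\beta\rangle$ of $B_n(D)$ is not bi-orderable.
   Context: $B_n(D)$ is the Artin braid group on $n$ strands, with generators $\sigma_1,\dots,\sigma_{n-1}$ and relations $\sigma_i\sigma_j=\sigma_j\sigma_i$ for $|i-j|\ge 2$ and $\sigma_i\sigma_{i+1}\sigma_i=\sigma_{i+1}\sigma_i\sigma_{i+1}$. The permutation homomorphism $\pi: B_n(D)\to S_n$ is given by $\pi(\sigma_i)=(i,i+1)$, and $P_n(D)=\ker\pi$. $H_\beta=\langle P_n(D),\beta\rangle$ is the subgroup generated by $P_n(D)$ and $\beta$. A group is bi-orderable if it admits a strict total ordering invariant under both left and right multiplication. *)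

(* Braid group B_n(D) modelled by its standard presentation:
   words in the letters sigma_{k+1}^{+-1} (k : 'I_(n.-1)) modulo the congruence
   generated by free cancellation and the Artin relations. *)
From mathcomp Require Import all_boot all_fingroup.
Set Implicit Arguments. Unset Strict Implicit. Unset Printing Implicit Defensive.

(* letter (k, b) : sigma_{k+1} if b = true, sigma_{k+1}^{-1} if b = false *)
Definition letter (n : nat) := ('I_n.-1 * bool)%type.
Definition word (n : nat) := seq (letter n).

Definition winv n (w : word n) : word n := rev (map (fun l => (l.1, ~~ l.2)) w).

Inductive braid_rel n : word n -> word n -> Prop :=
| br_cancel (k : 'I_n.-1) (b : bool) : braid_rel [:: (k, b); (k, ~~ b)] [::]
| br_comm (j k : 'I_n.-1) : (j.+2 <= k)%N ->
    braid_rel [:: (j, true); (k, true)] [:: (k, true); (j, true)]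
| br_braid (j k : 'I_n.-1) : k = j.+1 :> nat ->
    braid_rel [:: (j, true); (k, true); (j, true)] [:: (k, true); (j, true); (k, true)].

Inductive beq n : word n -> word n -> Prop :=
| beq_refl w : beq w w
| beq_sym u v : beq u v -> beq v u
| beq_trans u v w : beq u v -> beq v w -> beq u w
| beq_step (u v r s : word n) : braid_rel r s -> beq (u ++ r ++ v) (u ++ s ++ v).

Definition stau (n k : nat) : 'S_n :=
  match (k.+1 < n) =P true with
  | ReflectT h => tperm (Ordinal (ltnW h)) (Ordinal h)
  | ReflectF _ => 1%g
  end.

Definition braid_perm n (w : word n) : 'S_n :=
  (\prod_(l <- w) stau n (nat_of_ord l.1))%g.

Definition pure n (w : word n) : Prop := braid_perm w = 1%g.

Definition is_cycle_of_length n (s : 'S_n) (m : nat) : Prop :=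
  exists x : 'I_n, #|porbit s x| = m /\ forall y, y \notin porbit s x -> s y = y.

Inductive H_beta n (beta : word n) : word n -> Prop :=
| H_pure w : pure w -> H_beta beta w
| H_gen : H_beta beta beta
| H_mul u v : H_beta beta u -> H_beta beta v -> H_beta beta (u ++ v)
| H_inv u : H_beta beta u -> H_beta beta (winv u)
| H_beq u v : beq u v -> H_beta beta u -> H_beta beta v.

Definition biorderable n (H : word n -> Prop) : Prop :=
  exists lt : word n -> word n -> Prop,
    (forall a a' b b', beq a a' -> beq b b' -> lt a b -> lt a' b') /\
    (forall a, H a -> ~ lt a a) /\
    (forall a b c, H a -> H b -> H c -> lt a b -> lt b c -> lt a c) /\
    (forall a b, H a -> H b -> beq a b \/ lt a b \/ lt b a) /\
    (forall a b c, H a -> H b -> H c -> lt a b -> lt (c ++ a) (c ++ b)) /\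
    (forall a b c, H a -> H b -> H c -> lt a b -> lt (a ++ c) (b ++ c)).

From Stdlib Require Import ZArith Lia Setoid Morphisms.
From mathcomp Require Import all_boot all_fingroup zify.

(* Let x = sigma_1 ... sigma_i, whose permutation is an (i+1)-cycle, and y = sigma_1^2.
   Conjugating both by a braid c chosen so that pi(c^-1 x c) = pi(beta) puts
   X = c^-1 x c and the pure braid Y = c^-1 y c in H_beta.  The power x^(i+1) is the
   square of the Garside element of B_(i+1), hence commutes with y, so X^(i+1) commutes
   with Y.  In a bi-ordered group roots are unique, which forces X and Y, hence x and y,
   to commute.  They do not: the algebraic number of crossings between the strands
   starting at positions 1 and 2 is 2 more in y x than in x y. *)

Set Implicit Arguments. Unset Strict Implicit. Unset Printing Implicit Defensive.

#[global] Hint Resolve beq_refl : core.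

Section Words.
Variable n : nat.
Implicit Types (u v w c : word n).

Lemma beq_catl w u v : beq u v -> beq (w ++ u) (w ++ v).
Proof.
elim=> {u v} [u|u v _|u v x _ IH1 _ IH2|u v r s H].
- exact: beq_refl.
- exact: beq_sym.
- exact: beq_trans IH2.
- by rewrite !catA -!(catA (w ++ u)); apply: beq_step.
Qed.

Lemma beq_catr w u v : beq u v -> beq (u ++ w) (v ++ w).
Proof.
elim=> {u v} [u|u v _|u v x _ IH1 _ IH2|u v r s H].
- exact: beq_refl.
- exact: beq_sym.
- exact: beq_trans IH2.
- by rewrite -!catA; apply: beq_step.
Qed.

#[global] Instance beq_Equivalence : Equivalence (@beq n).
Proof. by split; [exact: beq_refl | exact: beq_sym | exact: beq_trans]. Qed.

#[global] Instance cat_beq_Proper : Proper (@beq n ==> @beq n ==> @beq n) cat.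
Proof. by move=> u u' eu v v' ev; apply: beq_trans (beq_catr _ eu) (beq_catl _ ev). Qed.

#[global] Instance cons_beq_Proper (l : letter n) : Proper (@beq n ==> @beq n) (cons l).
Proof. by move=> u v e; rewrite -cat1s e. Qed.

Lemma winvK : involutive (@winv n).
Proof.
by move=> u; rewrite /winv map_rev revK -map_comp map_id_in // => -[k b] _ /=; rewrite negbK.
Qed.

Lemma beq_cat_winv u : beq (u ++ winv u) [::].
Proof.
elim: u => [|[k b] u IH] /=; first reflexivity.
rewrite (_ : winv _ = winv u ++ [:: (k, ~~ b)]); last by rewrite /winv rev_cons cats1.
by rewrite catA -cat1s IH; exact: (beq_step [::] [::] (br_cancel k b)).
Qed.

Lemma beq_winv_cat u : beq (winv u ++ u) [::].
Proof. by have := beq_cat_winv (winv u); rewrite winvK. Qed.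

Definition wconj c u : word n := winv c ++ u ++ c.

Fixpoint wpow w k : word n := if k is k'.+1 then wpow w k' ++ w else [::].

Definition wcommute u v := beq (u ++ v) (v ++ u).

Lemma wpowS w k : wpow w k.+1 = wpow w k ++ w.
Proof. by []. Qed.

#[global] Instance wconj_beq_Proper c : Proper (@beq n ==> @beq n) (wconj c).
Proof. by move=> u v e; rewrite /wconj e. Qed.

Lemma wconj_cat c u v : beq (wconj c (u ++ v)) (wconj c u ++ wconj c v).
Proof. by rewrite /wconj -!catA (catA c) beq_cat_winv. Qed.

Lemma wconjK c u : beq (wconj (winv c) (wconj c u)) u.
Proof. by rewrite /wconj winvK !catA beq_cat_winv -!catA beq_cat_winv cats0. Qed.

Lemma wpow_wconj c u k : beq (wpow (wconj c u) k) (wconj c (wpow u k)).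
Proof.
elim: k => [|k IH] /=; first by rewrite /wconj beq_winv_cat.
by rewrite IH -wconj_cat.
Qed.

Lemma wcommute_wconj c u v : wcommute u v -> wcommute (wconj c u) (wconj c v).
Proof. by rewrite /wcommute -!wconj_cat => ->. Qed.

Lemma wcommute_wconjE c u v : wcommute (wconj c u) (wconj c v) <-> wcommute u v.
Proof.
split; last exact: wcommute_wconj.
by move/(wcommute_wconj (winv c)); rewrite /wcommute !wconjK.
Qed.

Lemma wconj_fixE u v : beq (wconj v u) u <-> wcommute u v.
Proof.
rewrite /wcommute /wconj; split=> e.
  by move: (beq_catl v e); rewrite !catA beq_cat_winv.
by rewrite e catA beq_winv_cat.
Qed.

Lemma wcommute_catr u v w : wcommute u v -> wcommute u w -> wcommute u (v ++ w).
Proof. by rewrite /wcommute => uv uw; rewrite catA uv -catA uw catA. Qed.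

Lemma wpow_comm u k : u ++ wpow u k = wpow u k ++ u.
Proof. by elim: k => [|k IH] /=; rewrite ?cats0 // catA IH. Qed.

Lemma wpow_rot u v k : u ++ wpow (v ++ u) k = wpow (u ++ v) k ++ u.
Proof. by elim: k => [|k IH] /=; rewrite ?cats0 // !catA IH -!catA. Qed.

End Words.

Section BiorderableSubgroup.
Variables (n : nat) (H : word n -> Prop).
Hypotheses (H_nil : H [::]) (H_cat : forall u v, H u -> H v -> H (u ++ v))
  (H_winv : forall u, H u -> H (winv u)).

Lemma H_wpow x k : H x -> H (wpow x k).
Proof. by move=> hx; elim: k => [|k IH] //=; exact: H_cat. Qed.

(* Roots are unique in a bi-ordered group: [z < x] forces [z ^ k < x ^ k]. *)
Lemma biorderable_wcommute_wpow x y k : biorderable H -> H x -> H y ->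
  wcommute (wpow x k.+1) y -> wcommute x y.
Proof.
case=> lt [lt_beq [lt_irr [lt_trans [lt_total [lt_catl lt_catr]]]]] hx hy hxy.
have lt_wpow u v m : H u -> H v -> lt u v -> lt (wpow u m.+1) (wpow v m.+1).
  move=> hu hv uv; elim: m => [//|m IH].
  have [hum hvm] := (H_wpow m.+1 hu, H_wpow m.+1 hv).
  apply: (@lt_trans _ (wpow u m.+1 ++ v)); try exact: H_cat.
    exact: lt_catl.
  exact: lt_catr.
have hz : H (wconj y x) by apply: H_cat; [exact: H_winv | exact: H_cat].
have ez : beq (wpow (wconj y x) k.+1) (wpow x k.+1) by rewrite wpow_wconj wconj_fixE.
have hxk := H_wpow k.+1 hx.
apply/wconj_fixE; case: (lt_total _ _ hz hx) => [//|[zx|xz]]; case: (lt_irr _ hxk).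
- exact: lt_beq _ _ _ _ ez (beq_refl _) (lt_wpow _ _ _ hz hx zx).
- exact: lt_beq _ _ _ _ (beq_refl _) ez (lt_wpow _ _ _ hx hz xz).
Qed.

End BiorderableSubgroup.

Definition nswap (k x : nat) : nat := if x == k then k.+1 else if x == k.+1 then k else x.

Definition adj_pair (k x y : nat) : bool :=
  ((x == k) && (y == k.+1)) || ((x == k.+1) && (y == k)).

Lemma nswap_id k x : x != k -> x != k.+1 -> nswap k x = x.
Proof. by rewrite /nswap => /negbTE -> /negbTE ->. Qed.

Lemma adj_pairFl k x y : x != k -> x != k.+1 -> adj_pair k x y = false.
Proof. by rewrite /adj_pair => /negbTE -> /negbTE ->. Qed.

Lemma adj_pairFr k x y : y != k -> y != k.+1 -> adj_pair k x y = false.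
Proof. by rewrite /adj_pair => /negbTE -> /negbTE ->; rewrite !andbF. Qed.

Lemma adj_pair_nswap k x y : adj_pair k (nswap k x) (nswap k y) = adj_pair k x y.
Proof. by rewrite /adj_pair /nswap; repeat case: eqP; lia. Qed.

Lemma nswap_far_eq j k x : (j.+2 <= k) || (k.+2 <= j) ->
  ((nswap k x == j) = (x == j)) * ((nswap k x == j.+1) = (x == j.+1)).
Proof. by rewrite /nswap => h; split; repeat case: eqP; lia. Qed.

Lemma adj_pair_nswap_far j k x y : (j.+2 <= k) || (k.+2 <= j) ->
  adj_pair j (nswap k x) (nswap k y) = adj_pair j x y.
Proof. by move=> h; rewrite /adj_pair !(nswap_far_eq _ h). Qed.

Lemma nswap_comm j k x : j.+2 <= k -> nswap k (nswap j x) = nswap j (nswap k x).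
Proof. by rewrite /nswap => h; repeat case: eqP; lia. Qed.

Lemma near_adj_cases j x :
  [\/ x = j, x = j.+1, x = j.+2 | [/\ x != j, x != j.+1 & x != j.+2]].
Proof.
have [->|?] := eqVneq x j; first by constructor.
have [->|?] := eqVneq x j.+1; first by constructor.
by have [->|?] := eqVneq x j.+2; constructor.
Qed.

Lemma nswap_braid j x : nswap j (nswap j.+1 (nswap j x)) = nswap j.+1 (nswap j (nswap j.+1 x)).
Proof. by rewrite /nswap; repeat case: eqP; lia. Qed.

Lemma succ_eqF j : ((j.+1 == j) = false) * ((j == j.+1) = false) * ((j.+2 == j) = false) *
  ((j == j.+2) = false) * ((j.+2 == j.+1) = false) * ((j.+1 == j.+2) = false).
Proof. by repeat split; lia. Qed.

Lemma adj_pair_braid j x y :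
  (Z.b2z (adj_pair j x y) + Z.b2z (adj_pair j.+1 (nswap j x) (nswap j y))
   + Z.b2z (adj_pair j (nswap j.+1 (nswap j x)) (nswap j.+1 (nswap j y))) =
   Z.b2z (adj_pair j.+1 x y) + Z.b2z (adj_pair j (nswap j.+1 x) (nswap j.+1 y))
   + Z.b2z (adj_pair j.+1 (nswap j (nswap j.+1 x)) (nswap j (nswap j.+1 y))))%Z.
Proof.
case: (near_adj_cases j x) => [->|->|->|[h0 h1 h2]]; last first.
  by rewrite !(nswap_id h0 h1, nswap_id h1 h2, adj_pairFl _ h0 h1, adj_pairFl _ h1 h2).
all: case: (near_adj_cases j y) => [->|->|->|[h0 h1 h2]]; last first.
all: try by rewrite !(nswap_id h0 h1, nswap_id h1 h2, adj_pairFr _ h0 h1, adj_pairFr _ h1 h2).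
all: by rewrite /nswap /adj_pair !eqxx !succ_eqF /= ?eqxx ?succ_eqF.
Qed.

Lemma letter_lt n (l : 'I_n.-1) : (val l).+1 < n.
Proof. by case: n l => [|n] []. Qed.

Lemma stau_val n k (x : 'I_n) : k.+1 < n -> val (stau n k x) = nswap k x.
Proof.
rewrite /stau; case: eqP => // h _.
case: tpermP => [->|->|hk hk1] /=; rewrite /nswap ?eqxx //; first by case: eqP; lia.
by case: eqP => [e|_]; [case: hk | case: eqP => [e|//]; case: hk1]; apply: val_inj.
Qed.

Lemma stau_tperm n (a b : 'I_n) : b = a.+1 :> nat -> stau n a = tperm a b.
Proof.
move=> hb; rewrite /stau; case: eqP => [h|[]]; last by rewrite -hb ltn_ord.
by congr tperm; apply: val_inj.
Qed.

Lemma stauK n k : (stau n k * stau n k = 1)%g.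
Proof. by rewrite /stau; case: eqP => h; [exact: tperm2 | exact: mulg1]. Qed.

Lemma braid_perm_nil n : braid_perm ([::] : word n) = 1%g.
Proof. exact: big_nil. Qed.

Lemma braid_perm_cons n (l : letter n) (u : word n) :
  braid_perm (l :: u) = (stau n l.1 * braid_perm u)%g.
Proof. exact: big_cons. Qed.

Lemma braid_perm_cat n (u v : word n) : braid_perm (u ++ v) = (braid_perm u * braid_perm v)%g.
Proof. exact: big_cat. Qed.

Lemma braid_perm_sq n (l : letter n) : braid_perm [:: l; l] = 1%g.
Proof. by rewrite !braid_perm_cons braid_perm_nil mulg1 stauK. Qed.

Lemma braid_perm_winv n (u : word n) : braid_perm (winv u) = (braid_perm u)^-1%g.
Proof.
elim: u => [|l u IH]; first by rewrite braid_perm_nil invg1.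
rewrite /winv /= rev_cons -cats1 braid_perm_cat -/(winv u) IH braid_perm_cons invMg.
rewrite braid_perm_cons braid_perm_nil mulg1; congr (_ * _)%g.
by apply: (mulgI (stau n l.1)); rewrite stauK mulgV.
Qed.

Lemma braid_rel_perm n (r s : word n) : braid_rel r s -> braid_perm r = braid_perm s.
Proof.
rewrite /braid_perm; case=> [k b|j k hjk|j k hjk]; rewrite !big_cons !big_nil ?mulg1 ?stauK //.
all: apply/permP => x; apply: val_inj; rewrite !permM !stau_val ?letter_lt //.
  exact: nswap_comm.
by rewrite hjk nswap_braid.
Qed.

Lemma beq_braid_perm n (u v : word n) : beq u v -> braid_perm u = braid_perm v.
Proof.
elim=> {u v} [//|u v _ ->//|u v w _ -> _ ->//|u v r s /braid_rel_perm e].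
by rewrite !braid_perm_cat e.
Qed.

(* Algebraic number of crossings, in [w], between the strands starting at [a] and [b],
   when [w] is preceded by a braid of permutation [p]. *)
Fixpoint wcross n (a b : 'I_n) (p : {perm 'I_n}) (w : word n) : Z :=
  if w is l :: w' then
    let c := Z.b2z (adj_pair l.1 (p a) (p b)) in
    ((if l.2 then c else - c) + wcross a b (p * stau n l.1)%g w')%Z
  else 0%Z.

Section Crossings.
Variables (n : nat) (a b : 'I_n).

Lemma wcross_cat p (u v : word n) :
  wcross a b p (u ++ v) = (wcross a b p u + wcross a b (p * braid_perm u)%g v)%Z.
Proof.
elim: u p => [|l u IH] p /=; first by rewrite braid_perm_nil mulg1.
by rewrite IH braid_perm_cons mulgA Z.add_assoc.
Qed.

Lemma perm_stau_val (p : {perm 'I_n}) (k : 'I_n.-1) x :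
  val ((p * stau n k)%g x) = nswap k (p x).
Proof. by rewrite permM stau_val // letter_lt. Qed.

Lemma braid_rel_wcross p (r s : word n) : braid_rel r s -> wcross a b p r = wcross a b p s.
Proof.
case=> [k c|j k hjk|j k hjk] /=; rewrite !perm_stau_val.
- by rewrite adj_pair_nswap; case: adj_pair; case: c.
- by rewrite !adj_pair_nswap_far ?hjk ?orbT //; lia.
- by rewrite hjk !Z.add_0_r !Z.add_assoc adj_pair_braid.
Qed.

Lemma beq_wcross p (u v : word n) : beq u v -> wcross a b p u = wcross a b p v.
Proof.
elim=> {u v} [//|u v _ ->//|u v w _ -> _ ->//|u v r s e].
by rewrite !wcross_cat (braid_rel_wcross _ e) (braid_rel_perm e).
Qed.

Lemma wcross_sq p (k : 'I_n.-1) :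
  wcross a b p [:: (k, true); (k, true)] = (2 * Z.b2z (adj_pair k (p a) (p b)))%Z.
Proof. by rewrite /= !perm_stau_val adj_pair_nswap; case: adj_pair. Qed.

End Crossings.

Section Sigmas.
Variable K : nat.

Definition sigma j : letter K.+2 := (inord j, true).

Definition sigmas i : word K.+2 := [seq sigma j | j <- iota 0 i].

Lemma sigma_val j : j <= K -> val (sigma j).1 = j.
Proof. exact: inordK. Qed.

Lemma sigmasS i : sigmas i.+1 = sigmas i ++ [:: sigma i].
Proof. by rewrite /sigmas (_ : i.+1 = i + 1) ?iotaD ?map_cat // addn1. Qed.

Lemma sigma_commute j k : j <= K -> k <= K -> (j.+2 <= k) || (k.+2 <= j) ->
  wcommute [:: sigma j] [:: sigma k].
Proof.
move=> hj hk; rewrite /wcommute => /orP[] h; last symmetry.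
all: apply: (beq_step [::] [::] (br_comm _)); rewrite !inordK //.
Qed.

Lemma sigma_braid j w : j < K ->
  beq [:: sigma j, sigma j.+1, sigma j & w] [:: sigma j.+1, sigma j, sigma j.+1 & w].
Proof. by move=> hj; apply: (beq_step [::] w (br_braid _)); rewrite !inordK //; lia. Qed.

Lemma wcommute_sigma_seq j (s : seq nat) : j <= K ->
  {in s, forall e, (e <= K) && ((j.+2 <= e) || (e.+2 <= j))} ->
  wcommute [seq sigma e | e <- s] [:: sigma j].
Proof.
move=> hj; elim: s => [|e s IH] hs //=; rewrite /wcommute.
have /andP[he hje] := hs e (mem_head _ _).
rewrite -cat1s -catA IH => [|f hf]; last by apply: hs; rewrite inE hf orbT.
by rewrite !catA (sigma_commute he hj) // orbC.
Qed.

Lemma sigmas_shift i j : i <= K.+1 -> j.+1 < i ->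
  beq (sigmas i ++ [:: sigma j]) (sigma j.+1 :: sigmas i).
Proof.
move=> hi hji; rewrite /sigmas (_ : i = j + (2 + (i - j.+2))); last by lia.
rewrite iotaD iotaD map_cat /= add0n -!catA /=.
set A := map _ (iota 0 j); set B := map _ (iota (j + 2) _).
have hB : wcommute B [:: sigma j].
  apply: wcommute_sigma_seq; first lia.
  by move=> e; rewrite mem_iota => /andP[h1 h2]; apply/andP; split; lia.
have hA : wcommute A [:: sigma j.+1].
  apply: wcommute_sigma_seq; first lia.
  by move=> e; rewrite mem_iota => /andP[h1 h2]; apply/andP; split; lia.
by rewrite hB sigma_braid; [rewrite -cat1s catA hA | lia].
Qed.

Lemma wpow_sigmas_shift i t j : i <= K.+1 -> j + t < i ->
  beq (wpow (sigmas i) t ++ [:: sigma j]) (sigma (j + t) :: wpow (sigmas i) t).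
Proof.
move=> hi; elim: t j => [|t IH] j ht /=; first by rewrite addn0.
rewrite -catA sigmas_shift //; last by lia.
by rewrite -cat1s catA IH -?addSnnS //; lia.
Qed.

Lemma wpow_sigma0_sigmas i t : i <= K.+1 -> t < i ->
  beq (wpow ([:: sigma 0] ++ sigmas i) t ++ [:: sigma 0]) (sigmas t.+1 ++ wpow (sigmas i) t).
Proof.
move=> hi; elim: t => [//|t IH] ht.
rewrite wpowS !catA IH; last by lia.
rewrite -!catA (catA (wpow _ t)) -wpowS (wpow_sigmas_shift (j:=0)) //.
by rewrite (sigmasS t.+1) -catA.
Qed.

(* Both [(sigma 0 ++ sigmas i) ^ i] and [(sigmas i ++ sigma 0) ^ i] equal [sigmas i ^ (i+1)],
   and these two words are conjugate under [sigma 0]. *)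
Lemma sigmas_wpow_commute i : 0 < i <= K.+1 -> wcommute (wpow (sigmas i) i.+1) [:: sigma 0].
Proof.
case: i => [//|t] /andP[_ hi]; set D := sigmas t.+1.
have hQ := wpow_sigma0_sigmas hi (ltnSn t).
have e1 : beq (wpow D t.+2) (wpow ([:: sigma 0] ++ D) t.+1).
  by rewrite !wpowS -wpow_comm catA hQ.
have e2 : beq (wpow D t.+2) (wpow (D ++ [:: sigma 0]) t.+1).
  rewrite [wpow (D ++ _) _]wpowS catA -wpow_rot -catA hQ.
  by rewrite wpowS -wpow_comm wpowS -wpow_comm.
by rewrite /wcommute e1 -wpow_rot -e2 e1.
Qed.

End Sigmas.

Definition cycdown (i x : nat) : nat := if x == 0 then i else if x <= i then x.-1 else x.

Lemma nswap_cycdown i x : nswap i (cycdown i x) = cycdown i.+1 x.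
Proof.
rewrite /cycdown; case: eqP => [_|x0]; first by rewrite /nswap eqxx.
case: (ltngtP x i.+1) => h.
- rewrite (_ : x <= i); last by lia.
  by apply: nswap_id; apply/eqP; lia.
- rewrite (_ : x <= i = false); last by lia.
  by apply: nswap_id; apply/eqP; lia.
- by rewrite h ltnn /nswap (_ : (i.+1 == i) = false) ?eqxx //; lia.
Qed.

Lemma braid_perm_sigmas K i (x : 'I_K.+2) : i <= K.+1 ->
  val (braid_perm (sigmas K i) x) = cycdown i x.
Proof.
elim: i => [|i IH] hi.
  by rewrite /sigmas /= braid_perm_nil perm1 /cycdown; case: (nat_of_ord x).
rewrite sigmasS braid_perm_cat braid_perm_cons braid_perm_nil mulg1 permM.
by rewrite stau_val sigma_val ?IH ?nswap_cycdown //; lia.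
Qed.

Section BraidPermSurjective.
Variable n : nat.

Lemma braid_perm_tperm_adj (a b : 'I_n) : b = a.+1 :> nat ->
  exists w : word n, braid_perm w = tperm a b.
Proof.
move=> hb; have ha : a < n.-1 by have := ltn_ord b; rewrite -subn1; lia.
exists [:: (Ordinal ha, true)].
by rewrite braid_perm_cons braid_perm_nil mulg1 (stau_tperm hb).
Qed.

Lemma braid_perm_tperm_lt d (a b : 'I_n) : b = a + d.+1 :> nat ->
  exists w : word n, braid_perm w = tperm a b.
Proof.
elim: d b => [|d IH] b hb; first by apply: braid_perm_tperm_adj; lia.
have hc : b.-1 < n by have := ltn_ord b; lia.
pose c := Ordinal hc.
have [u hu] : exists u : word n, braid_perm u = tperm a c by apply: IH => /=; lia.
have [v hv] : exists v : word n, braid_perm v = tperm c b.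
  by apply: braid_perm_tperm_adj => /=; lia.
exists (v ++ u ++ v); rewrite !braid_perm_cat hu hv.
have ac : a != c by apply/eqP => /(congr1 (@nat_of_ord n)) /=; lia.
have ab : a != b by apply/eqP => /(congr1 (@nat_of_ord n)) /=; lia.
by rewrite -{1}tpermV -conjgE tpermJ tpermL tpermD // eq_sym.
Qed.

Lemma braid_perm_tperm (a b : 'I_n) : exists w : word n, braid_perm w = tperm a b.
Proof.
case: (ltngtP a b) => [ab|ba|/val_inj ->].
- by apply: (@braid_perm_tperm_lt (b - a).-1); lia.
- by rewrite tpermC; apply: (@braid_perm_tperm_lt (a - b).-1); lia.
- by exists [::]; rewrite braid_perm_nil tperm1.
Qed.

Lemma braid_perm_surj (s : {perm 'I_n}) : exists w : word n, braid_perm w = s.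
Proof.
have [ts -> _] := prod_tpermP s; elim: ts => [|t ts [w hw]].
  by exists [::]; rewrite big_nil braid_perm_nil.
have [u hu] := braid_perm_tperm t.1 t.2.
by exists (u ++ w); rewrite big_cons braid_perm_cat hu hw.
Qed.

End BraidPermSurjective.

Section CycleConjugacy.
Variables (n i : nat) (tau : {perm 'I_n}) (x0 : 'I_n).
Hypothesis orbit_size : #|porbit tau x0| = i.+1.

(* List the orbit of [x0] backwards along [tau], then the rest of ['I_n]. *)
Lemma cycle_labelling : exists c : {perm 'I_n},
  (forall k : 'I_n, k <= i -> c k = iter k (tau^-1)%g x0) /\
  (forall k : 'I_n, i < k -> c k \notin porbit tau x0).
Proof.
set O := porbit tau x0.
set L := traject (tau^-1)%g x0 i.+1 ++ enum (~: O).
have sizeC : size (enum (~: O)) = n - i.+1.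
  by rewrite -cardE; have := cardsC O; rewrite card_ord /O orbit_size; lia.
have sizeL : size L = n.
  by rewrite size_cat size_traject sizeC; have := cardsC O; rewrite card_ord /O orbit_size; lia.
have uniqL : uniq L.
  rewrite cat_uniq enum_uniq andbT -orbit_size -porbitV uniq_traject_porbit /=.
  apply/hasPn => y; rewrite mem_enum in_setC /O -porbitV porbit_traject porbitV orbit_size.
  by move/negPf => ->.
have injL : injective (fun k : 'I_n => nth x0 L k).
  by move=> u v /eqP; rewrite nth_uniq ?sizeL // => /eqP /val_inj.
exists (perm injL); split=> k hk; rewrite permE /L nth_cat size_traject.
  by rewrite ltnS hk nth_traject.
rewrite ltnNge hk /=.
have : nth x0 (enum (~: O)) (k - i.+1) \in enum (~: O).
  by apply: mem_nth; rewrite sizeC; have := ltn_ord k; lia.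
by rewrite mem_enum in_setC.
Qed.

Lemma cycdown_conj (t0 : {perm 'I_n}) :
  (forall y, y \notin porbit tau x0 -> tau y = y) ->
  (forall k : 'I_n, t0 k = cycdown i k :> nat) ->
  exists c : {perm 'I_n}, (t0 ^ c)%g = tau.
Proof.
move=> tau_fix t0E; have [c [c_orbit c_rest]] := cycle_labelling.
suff ct0 k : c (t0 k) = tau (c k).
  by exists c; apply/permP => z; rewrite !permM ct0 permKV.
have [ki|ik] := leqP k i; last first.
  have t0k : t0 k = k by apply: val_inj; rewrite /= t0E /cycdown ifF ?ifF; lia.
  by rewrite t0k tau_fix ?c_rest.
have t0ki : t0 k <= i by rewrite t0E /cycdown; case: eqP => // _; rewrite ki; lia.
rewrite !c_orbit // t0E /cycdown; case: eqP => [->|k0].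
  apply: (@perm_inj _ (tau^-1)%g); rewrite -iterS -orbit_size -porbitV.
  by rewrite iter_porbit permK.
by rewrite ki -[in RHS](prednK (_ : 0 < k)) ?iterS ?permKV //; lia.
Qed.

End CycleConjugacy.

(* [sigmas i] carries the strands starting at 0 and 1 to the non-adjacent positions i and 0,
   so [sigma 0 ^ 2] makes them cross when it comes before [sigmas i] but not after. *)
Lemma sigmas_sigma_sq_noncommute K i : 2 <= i <= K.+1 ->
  ~ wcommute (sigmas K i) [:: sigma K 0; sigma K 0].
Proof.
move=> /andP[i2 iK] /(beq_wcross ord0 (inord 1) 1%g).
rewrite !wcross_cat braid_perm_sq mul1g mulg1 !wcross_sq !perm1.
rewrite !braid_perm_sigmas // sigma_val // inordK //.
have -> : cycdown i ord0 = i by [].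
have -> : cycdown i 1 = 0 by rewrite /cycdown /= (ltnW i2).
have -> : adj_pair 0 i 0 = false by rewrite /adj_pair; lia.
have -> : adj_pair 0 (@nat_of_ord K.+2 ord0) 1 = true by [].
lia.
Qed.

Lemma H_beta_nil n (beta : word n) : H_beta beta [::].
Proof. by apply: H_pure; rewrite /pure braid_perm_nil. Qed.

Lemma H_beta_braid_perm n (beta w : word n) : braid_perm w = braid_perm beta -> H_beta beta w.
Proof.
move=> e; apply: (@H_beq _ _ ((w ++ winv beta) ++ beta)).
  by rewrite -catA beq_winv_cat cats0.
apply: H_mul; last exact: H_gen.
by apply: H_pure; rewrite /pure braid_perm_cat braid_perm_winv e mulgV.
Qed.

Theorem mainTheorem12 (n i : nat) (beta : word n) :
  (3 <= n)%N -> (2 <= i <= n - 1)%N ->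
  is_cycle_of_length (braid_perm beta) i.+1 ->
  ~ biorderable (H_beta beta).
Proof.
move=> n3 /andP[i2 iln] [x0 [orbit_size tau_fix]] bo.
have [K nK] : exists K, n = K.+2 by exists n.-2; lia.
subst n; have iK : i <= K.+1 by lia.
set D := sigmas K i; set S := [:: sigma K 0; sigma K 0].
have [c Dc] := cycdown_conj orbit_size tau_fix (fun k => braid_perm_sigmas k iK).
have [C Cc] := braid_perm_surj c.
have X_in : H_beta beta (wconj C D).
  by apply: H_beta_braid_perm; rewrite !braid_perm_cat braid_perm_winv Cc -Dc conjgE.
have Y_in : H_beta beta (wconj C S).
  by apply: H_pure; rewrite /pure !braid_perm_cat braid_perm_winv braid_perm_sq mul1g Cc mulVg.
have DS : wcommute (wpow (wconj C D) i.+1) (wconj C S).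
  rewrite /wcommute wpow_wconj -/(wcommute _ _) wcommute_wconjE.
  by rewrite /S -cat1s; apply: wcommute_catr; apply: sigmas_wpow_commute; lia.
apply: (@sigmas_sigma_sq_noncommute K i); first lia.
apply/(wcommute_wconjE C).
exact: (biorderable_wcommute_wpow (@H_beta_nil _ beta) (@H_mul _ beta) (@H_inv _ beta)
          bo X_in Y_in DS).
Qed.
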